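(* Let $G$ and $H$ be connected graphs of orders $m\geq 2$ and $n\geq 2$, respectively, with $\mathrm{ldim}_f(G)=\frac{m}{2}$ and $\mathrm{ldim}_f(H)=\frac{n}{2}$. Then $\mathrm{ldim}_f(G\square H)\geq \max\{\mathrm{ldim}_f(G),\mathrm{ldim}_f(H)\}$.
   Context: All graphs are finite, simple and connected; $d$ is the shortest-path distance. For an edge $uv$ of a graph $X$, $L_X(uv)=\{x\in V(X): d_X(u,x)\neq d_X(v,x)\}$. A function $f:V(X)\to[0,1]$ is a local resolving function of $X$ if $\sum_{x\in L_X(uv)}f(x)\geq 1$ for every edge $uv$; $\mathrm{ldim}_f(X)$ is the minimum of $\sum_{v}f(v)$ over all local resolving functions. The Cartesian product $G\square H$ has vertex set $V(G)\times V(H)$, with $(u_1,v_1)$ adjacent to $(u_2,v_2)$ iff ($u_1u_2\in E(G)$ and $v_1=v_2$) or ($u_1=u_2$ and $v_1v_2\in E(H)$). *)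

From HB Require Import structures.
From mathcomp Require Import all_boot all_order all_algebra.
Set Implicit Arguments. Unset Strict Implicit. Unset Printing Implicit Defensive.
Import Order.TTheory GRing.Theory Num.Theory.

Definition simple_graph (T : finType) (e : rel T) : Prop :=
  symmetric e /\ irreflexive e.

Definition connected_graph (T : finType) (e : rel T) : Prop :=
  forall u v : T, connect e u v.

Fixpoint reach (T : finType) (e : rel T) (k : nat) (u : T) : {set T} :=
  match k with
  | 0 => [set u]
  | k'.+1 => reach e k' u :|: [set y | [exists x in reach e k' u, e x y]]
  end.

(* shortest-path distance: least k <= #|T| with v within k steps of u
   (for connected graphs this is the usual distance). *)
Definition dist (T : finType) (e : rel T) (u v : T) : nat :=
  find (fun k => v \in reach e k u) (iota 0 #|T|.+1).

Definition Lset (T : finType) (e : rel T) (u v : T) : {set T} :=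
  [set x | dist e u x != dist e v x].

Local Open Scope ring_scope.

Definition weight (R : realFieldType) (T : finType) (f : T -> R) : R :=
  \sum_(x : T) f x.

Definition local_resolving (R : realFieldType) (T : finType) (e : rel T)
    (f : T -> R) : Prop :=
  (forall x, 0 <= f x <= 1) /\
  (forall u v, e u v -> 1 <= \sum_(x in Lset e u v) f x).

Definition is_ldimf (R : realFieldType) (T : finType) (e : rel T) (r : R) : Prop :=
  (exists f : T -> R, local_resolving e f /\ weight f = r) /\
  (forall f : T -> R, local_resolving e f -> r <= weight f).

Definition cart_rel (T1 T2 : finType) (e1 : rel T1) (e2 : rel T2) : rel (T1 * T2) :=
  fun p q => (e1 p.1 q.1 && (p.2 == q.2)) || ((p.1 == q.1) && e2 p.2 q.2).

From HB Require Import structures.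
From mathcomp Require Import all_boot all_order all_algebra.
From mathcomp Require Import zify.
Import Order.TTheory GRing.Theory Num.Theory.
Set Implicit Arguments. Unset Strict Implicit. Unset Printing Implicit Defensive.

(* Distances in G □ H add up coordinatewise, so for a "horizontal" edge
   (u1,v)(u2,v) the resolving set L(u1,v)(u2,v) is exactly L_G(u1 u2) × V(H).
   Hence summing a local resolving function f of G □ H over the fibres
   {x} × V(H), and capping each sum at 1, gives a local resolving function of G
   of weight at most that of f, so ldim_f(G) <= weight f; symmetrically for H. *)

Section Reach.
Variables (T : finType) (e : rel T).

Lemma reach_subS k u : reach e k u \subset reach e k.+1 u.
Proof. exact: subsetUl. Qed.

Lemma reach_sub j k u : (j <= k)%N -> reach e j u \subset reach e k u.
Proof.
elim: k => [|k IHk]; first by rewrite leqn0 => /eqP ->.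
rewrite leq_eqVlt => /orP [/eqP -> //|]; rewrite ltnS => /IHk.
by move/subset_trans; apply; apply: reach_subS.
Qed.

Lemma reach_step k u x y : x \in reach e k u -> e x y -> y \in reach e k.+1 u.
Proof.
by move=> xk exy; rewrite /= !inE; apply/orP; right; apply/existsP; exists x; rewrite xk.
Qed.

Lemma reachSP k u y : y \in reach e k.+1 u ->
  y \in reach e k u \/ exists2 x, x \in reach e k u & e x y.
Proof. by rewrite /= !inE => /orP [|/existsP [x /andP [? ?]]]; [left | right; exists x]. Qed.

Lemma reach_stable k u j : reach e k u = reach e k.+1 u ->
  reach e (j + k) u = reach e k u.
Proof. by move=> Ek; elim: j => [//|j IHj]; rewrite addSn /= IHj -/(reach e k.+1 u) -Ek. Qed.

Lemma card_reach_growing k u :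
  (forall i, (i < k)%N -> reach e i u != reach e i.+1 u) -> (k < #|reach e k u|)%N.
Proof.
elim: k => [|k IHk] grow; first by rewrite /= cards1.
have lt_k : (k < #|reach e k u|)%N by apply: IHk => i ltik; apply: grow; lia.
have : (#|reach e k u| < #|reach e k.+1 u|)%N.
  by apply: proper_card; rewrite properEneq grow // reach_subS.
lia.
Qed.

(* The balls stabilise within #|T| steps: otherwise the #|T|-th ball would have
   more than #|T| points. *)
Lemma reach_sub_card k u : reach e k u \subset reach e #|T| u.
Proof.
have [leTk|ltTk] := leqP k #|T|; first exact: reach_sub.
have [[i /eqP Ei]|] := altP (@existsP _ (fun i : 'I_#|T| => reach e i u == reach e i.+1 u)).
  have ltiT := ltn_ord i.
  have := reach_stable (k - i) Ei; have := reach_stable (#|T| - i) Ei.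
  by rewrite !subnK; [move=> -> -> | lia | lia].
move=> /existsPn stuck; have grow i : (i < #|T|)%N -> reach e i u != reach e i.+1 u.
  by move=> ltiT; apply: (stuck (Ordinal ltiT)).
by have := card_reach_growing grow; rewrite ltnNge max_card.
Qed.

Lemma connect_reach u v : connect e u v -> exists k, v \in reach e k u.
Proof.
move=> /connectP [p + ->] {v}; elim/last_ind: p => [|p x IHp].
  by exists 0%N; rewrite /= inE.
rewrite rcons_path last_rcons => /andP [/IHp [k pk] ex].
by exists k.+1; apply: reach_step ex.
Qed.

Lemma has_reach_iota u v k : v \in reach e k u ->
  has (fun i => v \in reach e i u) (iota 0 #|T|.+1).
Proof.
move=> vk; apply/hasP; exists (#|T|); first by rewrite mem_iota /=.
exact: (subsetP (reach_sub_card k u)).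
Qed.

Lemma mem_reach_dist u v k : v \in reach e k u -> v \in reach e (dist e u v) u.
Proof.
move=> /has_reach_iota hasv; have := nth_find 0 hasv.
by rewrite nth_iota ?add0n // -[X in (_ < X)%N](size_iota 0 #|T|.+1) -has_find.
Qed.

Lemma dist_min u v k : v \in reach e k u -> (dist e u v <= k)%N.
Proof.
move=> vk; rewrite leqNgt; apply/negP => ltkd.
have := has_reach_iota vk; rewrite has_find size_iota => ltdT.
by have := before_find 0 ltkd; rewrite nth_iota ?add0n ?vk //; apply: ltn_trans ltdT.
Qed.

End Reach.

Section Cartesian.
Variables (T1 T2 : finType) (e1 : rel T1) (e2 : rel T2).
Local Notation E := (cart_rel e1 e2).

Lemma reach_cart_split k u v x y : (x, y) \in reach E k (u, v) ->
  exists a b, [/\ (a + b <= k)%N, x \in reach e1 a u & y \in reach e2 b v].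
Proof.
elim: k x y => [|k IHk] x y.
  by rewrite /= !inE xpair_eqE => /andP [xu yv]; exists 0%N, 0%N; rewrite !inE xu yv.
case/reachSP => [/IHk [a [b [leab xa yb]]]|[[x' y'] /IHk [a [b [leab xa yb]]]]].
  by exists a, b; split=> //; lia.
rewrite /cart_rel /= => /orP [/andP [ex /eqP <-]|/andP [/eqP <- ey]].
  by exists a.+1, b; split; [lia | apply: reach_step ex | ].
by exists a, b.+1; split; [lia | | apply: reach_step ey].
Qed.

Lemma reach_cart_pair a b u v x y : x \in reach e1 a u -> y \in reach e2 b v ->
  (x, y) \in reach E (a + b) (u, v).
Proof.
elim: a x => [|a IHa] x.
  rewrite /= inE => /eqP -> {x}; elim: b y => [|b IHb] y.
    by rewrite /= !inE => /eqP ->.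
  case/reachSP => [/IHb /(subsetP (reach_subS _ _ _)) //|[y' /IHb uy' ey]].
  by apply: reach_step uy' _; rewrite /cart_rel /= eqxx ey orbT.
move=> + yb; case/reachSP => [/IHa/(_ yb)|[x' /IHa/(_ yb) xy' ex]].
  by rewrite addSn; apply: (subsetP (reach_subS _ _ _)).
by rewrite addSn; apply: reach_step xy' _; rewrite /cart_rel /= ex eqxx.
Qed.

Hypotheses (conn1 : connected_graph e1) (conn2 : connected_graph e2).

Lemma dist_cart u v x y : dist E (u, v) (x, y) = (dist e1 u x + dist e2 v y)%N.
Proof.
have [k1 xk1] := connect_reach (conn1 u x).
have [k2 yk2] := connect_reach (conn2 v y).
have xyd := reach_cart_pair (mem_reach_dist xk1) (mem_reach_dist yk2).
have [a [b [leab xa yb]]] := reach_cart_split (mem_reach_dist xyd).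
have := dist_min xyd; have := dist_min xa; have := dist_min yb; lia.
Qed.

Lemma Lset_cart_l u1 u2 v : Lset E (u1, v) (u2, v) = [set p | p.1 \in Lset e1 u1 u2].
Proof. by apply/setP => -[x y]; rewrite !inE !dist_cart eqn_add2r. Qed.

Lemma Lset_cart_r u v1 v2 : Lset E (u, v1) (u, v2) = [set p | p.2 \in Lset e2 v1 v2].
Proof. by apply/setP => -[x y]; rewrite !inE !dist_cart eqn_add2l. Qed.

End Cartesian.

Local Open Scope ring_scope.

Section Resolving.
Variables (R : realFieldType) (T : finType) (e : rel T).

Lemma sum_min1_ge1 (A : {pred T}) (g : T -> R) : (forall x, 0 <= g x) ->
  1 <= \sum_(x in A) g x -> 1 <= \sum_(x in A) Num.min 1 (g x).
Proof.
move=> g_ge0 sum_ge1.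
have [[x /andP [Ax gx_ge1]]|] := altP (@existsP _ (fun x => (x \in A) && (1 <= g x))).
  rewrite (bigD1 x) //= min_l // lerDl; apply: sumr_ge0 => y _.
  by rewrite le_min ler01 g_ge0.
move=> /existsPn g_lt1; rewrite (eq_bigr g) // => x Ax.
by have := g_lt1 x; rewrite Ax -ltNge => /ltW; apply: min_r.
Qed.

Lemma local_resolving_min1 (g : T -> R) : (forall x, 0 <= g x) ->
  (forall u v, e u v -> 1 <= \sum_(x in Lset e u v) g x) ->
  local_resolving e (fun x => Num.min 1 (g x)) /\
  weight (fun x => Num.min 1 (g x)) <= weight g.
Proof.
move=> g_ge0 cover; split; last by apply: ler_sum => x _; rewrite ge_min lexx orbT.
split=> [x|u v euv]; first by rewrite le_min ler01 g_ge0 ge_min lexx.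
exact: sum_min1_ge1 (cover u v euv).
Qed.

End Resolving.

Section Projection.
Variables (R : realFieldType) (T1 T2 : finType) (e1 : rel T1) (e2 : rel T2).
Hypotheses (conn1 : connected_graph e1) (conn2 : connected_graph e2).
Variable f : T1 * T2 -> R.
Hypothesis f_res : local_resolving (cart_rel e1 e2) f.

Let f_ge0 p : 0 <= f p.
Proof. by case/andP: (f_res.1 p). Qed.

Lemma local_resolving_cart_l (v : T2) :
  exists g : T1 -> R, local_resolving e1 g /\ weight g <= weight f.
Proof.
have cover u1 u2 : e1 u1 u2 -> 1 <= \sum_(x in Lset e1 u1 u2) \sum_y f (x, y).
  move=> e_u; have -> : \sum_(x in Lset e1 u1 u2) \sum_y f (x, y) =
                        \sum_(p in [set p | p.1 \in Lset e1 u1 u2]) f p.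
    by rewrite pair_big_dep; apply: eq_big => -[x y] //=; rewrite !inE ?andbT.
  by rewrite -(Lset_cart_l conn1 conn2 _ _ v); apply: f_res.2; rewrite /cart_rel /= e_u eqxx.
have [g_res le_g] := local_resolving_min1 (fun x => sumr_ge0 _ (fun y _ => f_ge0 (x, y))) cover.
have -> : weight f = weight (fun x => \sum_y f (x, y)).
  by rewrite /weight pair_bigA; apply: eq_bigr => -[].
by exists (fun x => Num.min 1 (\sum_y f (x, y))).
Qed.

Lemma local_resolving_cart_r (u : T1) :
  exists g : T2 -> R, local_resolving e2 g /\ weight g <= weight f.
Proof.
have cover v1 v2 : e2 v1 v2 -> 1 <= \sum_(y in Lset e2 v1 v2) \sum_x f (x, y).
  move=> e_v; have -> : \sum_(y in Lset e2 v1 v2) \sum_x f (x, y) =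
                        \sum_(p in [set p | p.2 \in Lset e2 v1 v2]) f p.
    by rewrite exchange_big pair_big_dep; apply: eq_big => -[x y] //=; rewrite !inE.
  by rewrite -(Lset_cart_r conn1 conn2 u); apply: f_res.2; rewrite /cart_rel /= e_v eqxx orbT.
have [g_res le_g] := local_resolving_min1 (fun y => sumr_ge0 _ (fun x _ => f_ge0 (x, y))) cover.
have -> : weight f = weight (fun y => \sum_x f (x, y)).
  by rewrite /weight exchange_big pair_bigA; apply: eq_bigr => -[].
by exists (fun y => Num.min 1 (\sum_x f (x, y))).
Qed.

End Projection.

Theorem corollary3p12 (R : realFieldType) (T1 T2 : finType)
    (e1 : rel T1) (e2 : rel T2) (rG rH : R) :
  simple_graph e1 -> connected_graph e1 ->
  simple_graph e2 -> connected_graph e2 ->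
  (2 <= #|T1|)%N -> (2 <= #|T2|)%N ->
  is_ldimf e1 rG -> rG = #|T1|%:R / 2 ->
  is_ldimf e2 rH -> rH = #|T2|%:R / 2 ->
  forall f : T1 * T2 -> R, local_resolving (cart_rel e1 e2) f ->
    Num.max rG rH <= weight f.
Proof.
move=> _ conn1 _ conn2 card1 card2 [_ min_rG] _ [_ min_rH] _ f f_res.
have [u _] : exists u : T1, u \in T1 by apply/card_gt0P; apply: leq_trans card1.
have [v _] : exists v : T2, v \in T2 by apply/card_gt0P; apply: leq_trans card2.
rewrite ge_max; apply/andP; split.
- have [g [g_res le_g]] := local_resolving_cart_l conn1 conn2 f_res v.
  exact: le_trans (min_rG _ g_res) le_g.
- have [g [g_res le_g]] := local_resolving_cart_r conn1 conn2 f_res u.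
  exact: le_trans (min_rH _ g_res) le_g.
Qed.
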